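(* Let $\pi=x_1^2x_2^2x_3^2$ (with distinct variables $x_1,x_2,x_3$). For every $m\ge4$, $\mathrm{TD}(\pi,\Pi^2_{\infty,m,cf})=\infty$.
   Context: Fix a countably infinite set $X$ of variables and an alphabet $\Sigma$ with $|\Sigma|=2$, disjoint from $X$. A pattern is a nonempty finite string over $X\cup\Sigma$; it is constant-free if it contains no letter. A substitution is a morphism $(X\cup\Sigma)^*\to\Sigma^*$ fixing letters; $L(\pi)$ (erasing pattern language) is the set of all images of $\pi$. $\Pi^2_{\infty,m,cf}$ is the class of constant-free patterns over a binary alphabet in which every variable occurs at most $m$ times. A labelled example is $(w,\pm)$ with $w\in\Sigma^*$; a teaching set for $\pi$ w.r.t. a class $\Pi$ is a set $T$ of labelled examples consistent with $\pi$ ($w\in L(\pi)$ iff label $+$) such that every $\tau\in\Pi$ consistent with $T$ has $L(\tau)=L(\pi)$; $\mathrm{TD}(\pi,\Pi)$ is the minimum size of such a set, $\infty$ if no finite teaching set exists. *)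

From mathcomp Require Import all_boot.
Set Implicit Arguments. Unset Strict Implicit. Unset Printing Implicit Defensive.

(* Alphabet Sigma = bool (|Sigma| = 2); words are seq bool.
   Variables X = nat (countably infinite, disjoint from Sigma).
   A symbol of a general pattern is either a variable or a letter. *)
Definition symbol := (nat + bool)%type.
Definition pattern := seq symbol.

Definition constant_free (p : pattern) : bool :=
  all (fun a => if a is inl _ then true else false) p.

Definition subst_apply (s : nat -> seq bool) (p : pattern) : seq bool :=
  flatten (map (fun a => match a with inl x => s x | inr c => [:: c] end) p).

Definition lang (p : pattern) (w : seq bool) : Prop :=
  exists s : nat -> seq bool, w = subst_apply s p.

(* labelled example (w, b): b = true means label +, b = false means label - *)
Definition example := (seq bool * bool)%type.

Definition consistent (p : pattern) (T : seq example) : Prop :=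
  forall e, e \in T -> (lang p e.1 <-> e.2 = true).

Definition in_class (m : nat) (t : pattern) : Prop :=
  [/\ t != [::], constant_free t & forall x : nat, count_mem (inl x) t <= m].

Definition teaching_set (m : nat) (p : pattern) (T : seq example) : Prop :=
  consistent p T /\
  forall t, in_class m t -> consistent t T -> forall w, lang t w <-> lang p w.

Definition TD_infinite (m : nat) (p : pattern) : Prop :=
  ~ exists T : seq example, teaching_set m p T.

Definition pi_sq : pattern := [:: inl 0; inl 0; inl 1; inl 1; inl 2; inl 2].

From mathcomp Require Import all_boot zify.
Set Implicit Arguments. Unset Strict Implicit. Unset Printing Implicit Defensive.

(* Let T be a finite set of examples consistent with pi = x1^2 x2^2 x3^2.  We
   build a pattern tau = A^2 B^2 C^2 (A, B, C lists of variables) such that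
   - every variable occurs at most twice in A B C, hence at most four times
     in tau, and every variable of C occurs exactly twice in A B C (a "good
     triple");
   - L(tau) is contained in L(pi) and contains every positive word of T.
   Then tau is consistent with T, but L(tau) <> L(pi): the witness word
   X0 X0 Y0 Y0 Z Z, where Z contains |C| + 2 blocks 1 0^g with pairwise
   distinct gaps g >= 10, lies in L(pi) but not in L(tau).

   Next every word of L(pi) is shown to be an image of a good triple,
   good triples are merged by disjoint unions, and the theorem follows. *)

Section Occurrences.
Variable T : Type.
Implicit Types (W L R F Q X : seq T).

Definition occurs_at W (p : nat) F : Prop :=
  exists L R, size L = p /\ W = L ++ F ++ R.

Lemma occurs_at_cat L F R : occurs_at (L ++ F ++ R) (size L) F.
Proof. by exists L, R. Qed.

Lemma occurs_at_factor W p Q q1 F q2 :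
  occurs_at W p Q -> Q = q1 ++ F ++ q2 -> occurs_at W (p + size q1) F.
Proof.
case=> [L [R [<- ->]]] ->; exists (L ++ q1), (q2 ++ R).
by rewrite size_cat -!catA.
Qed.

Lemma cat_prefix L1 L2 X1 X2 :
  L1 ++ X1 = L2 ++ X2 -> size L1 <= size L2 -> exists q, L2 = L1 ++ q /\ X1 = q ++ X2.
Proof.
elim: L1 L2 => [|a L1 IH] [|b L2] //=; first by move=> ->; exists [::].
- by move=> ->; exists (b :: L2).
- by case=> -> /IH IH' /IH' [q [-> ->]]; exists q.
Qed.

Lemma occurs_at_square_shift L Q R p F :
  occurs_at (L ++ Q ++ Q ++ R) p F -> size L <= p -> p + size F <= size L + size Q ->
  occurs_at (L ++ Q ++ Q ++ R) (p + size Q) F.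
Proof.
case=> [L' [R' [<- E]]] Hp HF.
have [q1 [EL' EQ]] := cat_prefix E Hp.
have [q2 [EQ2 _]] : exists q2, Q = (q1 ++ F) ++ q2 /\ R' = q2 ++ Q ++ R.
  apply: (cat_prefix (X1 := R')); first by rewrite -catA -EQ.
  by move: HF; rewrite EL' !size_cat; lia.
exists (L ++ Q ++ q1), (q2 ++ R); split; first by rewrite EL' !size_cat; lia.
by rewrite {2}EQ2 -!catA.
Qed.

End Occurrences.

(* Words over {true, false} are read as sequences of blocks: [block g] is a
   [true] followed by [g] letters [false], and [run g] = [true 0^g true] is the
   shortest factor that exhibits the gap [g] between two consecutive [true]s. *)
Definition block (g : nat) : seq bool := true :: nseq g false.
Definition run (g : nat) : seq bool := true :: nseq g false ++ [:: true].

Definition block_offset (G : seq nat) (k : nat) : nat := sumn (map S (take k G)).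

Lemma count_true_nseq_false g : count_mem true (nseq g false) = 0.
Proof. by elim: g. Qed.

Lemma count_true_blocks G : count_mem true (flatten (map block G)) = size G.
Proof. by elim: G => //= g G IH; rewrite count_cat /= count_true_nseq_false IH. Qed.

Lemma size_blocks G : size (flatten (map block G)) = sumn (map S G).
Proof. by elim: G => //= g G IH; rewrite size_cat IH /= size_nseq. Qed.

Lemma nseq_false_true_inj a b X Y :
  nseq a false ++ true :: X = nseq b false ++ true :: Y -> a = b /\ X = Y.
Proof.
elim: a b => [|a IH] [|b] //=; first by case=> ->.
by case=> /IH [-> ->].
Qed.

Lemma nseq_false_prefix a Y L Z : nseq a false ++ Y = L ++ true :: Z ->
  exists L', L = nseq a false ++ L' /\ Y = L' ++ true :: Z.
Proof.
elim: a L => [|a IH] L /=; first by move=> ->; exists L.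
case: L => [|y L] //= [<-] /IH [L' [-> ->]]; by exists L'.
Qed.

Lemma run_in_blocks G tl L g R : count_mem true tl = 0 ->
  flatten (map block G) ++ true :: tl = L ++ run g ++ R ->
  exists k, [/\ k < size G, nth 0 G k = g & size L = block_offset G k].
Proof.
move=> no_true; elim: G L => [|g0 G IH] L /=.
  move/(congr1 (count_mem true)); rewrite /run /= !count_cat /= no_true.
  by rewrite !count_cat count_true_nseq_false /=; lia.
rewrite /block /= -catA; case: L => [|b L] /=.
  have [r Er] : exists r, flatten (map block G) ++ true :: tl = true :: r.
    by case: G {IH} => [|g1 G] /=; eexists.
  case; rewrite Er /run /= -catA /= => /nseq_false_true_inj [-> _].
  by exists 0.
case=> _ /nseq_false_prefix [L' [-> E]].
have [k [lt_k gap_k off_k]] : exists k, [/\ k < size G, nth 0 G k = g & size L' = block_offset G k].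
  by apply: IH; rewrite E /run /= -catA.
by exists k.+1; rewrite size_cat size_nseq off_k.
Qed.

Lemma split_first_true (Q : seq bool) : true \in Q ->
  exists a Q', Q = nseq a false ++ true :: Q'.
Proof.
elim: Q => [|[] Q IH] //=; first by exists 0, Q.
by rewrite inE /= => /IH [a [Q' ->]]; exists a.+1, Q'.
Qed.

Lemma run_of_two_trues (Q : seq bool) : 2 <= count_mem true Q ->
  exists q1 g q2, Q = q1 ++ run g ++ q2.
Proof.
have mem_true (S : seq bool) : 0 < count_mem true S -> true \in S.
  by rewrite -has_pred1 has_count.
move=> H; have [a [Q1 EQ]] := split_first_true (mem_true _ (ltnW H)).
move: H; rewrite EQ count_cat count_true_nseq_false /= => /mem_true.
case/split_first_true => b [Q2 ->].
by exists (nseq a false), b, Q2; rewrite /run -catA.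
Qed.

Lemma equal_gaps (P S : seq nat) (x : nat) k k' :
  uniq (P ++ x :: S) -> k < k' < size (P ++ S ++ x :: S) ->
  nth 0 (P ++ S ++ x :: S) k = nth 0 (P ++ S ++ x :: S) k' ->
  exists2 i, i < size S & k = size P + i /\ k' = size P + size S + 1 + i.
Proof.
set Pre := P ++ S ++ [:: x] => uG /andP [lt_kk' lt_k'].
have EG : P ++ S ++ x :: S = Pre ++ S by rewrite /Pre -!catA.
have uPre : uniq Pre.
  by rewrite (perm_uniq (s2 := P ++ x :: S)) // /Pre perm_cat2l (perm_catC S [:: x]).
have sPre : size Pre = size P + size S + 1 by rewrite /Pre !size_cat /=; lia.
have uS : uniq S by move: uG; rewrite cat_uniq /= => /and3P [_ _ /andP [_ ->]].
have ES j : j < size S -> nth 0 S j = nth 0 Pre (size P + j).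
  by move=> lt_jS; rewrite /Pre nth_cat ltnNge leq_addr /= addKn nth_cat lt_jS.
rewrite EG; move: lt_k'; rewrite EG size_cat; clearbody Pre => lt_k'.
have [lt_k'P|le_Pk'] := ltnP k' (size Pre).
  rewrite !nth_cat lt_k'P (ltn_trans lt_kk' lt_k'P) => /eqP.
  by rewrite nth_uniq ?(ltn_trans lt_kk') // => /eqP E; move: lt_kk'; rewrite E ltnn.
set j := k' - size Pre.
have lt_jS : j < size S by rewrite /j; lia.
have [lt_kP|le_Pk] := ltnP k (size Pre); last first.
  rewrite !nth_cat ltnNge le_Pk ltnNge le_Pk' /= => /eqP.
  rewrite nth_uniq // /j; last by rewrite ltn_subLR // (ltn_trans lt_kk' lt_k').
  by move/eqP => E; exfalso; lia.
rewrite !nth_cat lt_kP ltnNge le_Pk' /= -/j ES // => /eqP.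
rewrite nth_uniq //; last by rewrite sPre; lia.
by move/eqP => Ek; exists j => //; split => //; rewrite /j; lia.
Qed.

Lemma block_offset_mono G : {homo block_offset G : k k' / k <= k'}.
Proof.
move=> k k' le_kk'; rewrite /block_offset -[take k' G](cat_take_drop k).
by rewrite take_takel // map_cat sumn_cat leq_addr.
Qed.

Lemma block_offset_cat P Q i :
  block_offset (P ++ Q) (size P + i) = sumn (map S P) + block_offset Q i.
Proof. by rewrite /block_offset take_cat ltnNge leq_addr /= addKn map_cat sumn_cat. Qed.

(* Read as a
   block word its gaps are [4 9 5 6], then [10, ..., 9 + t], then [7] (the seam
   between the two copies of [Z]), then [10, ..., 9 + t] again. *)
Definition X0 : seq bool := block 4.
Definition Y0 : seq bool := nseq 5 false ++ [:: true].
Definition witness_tail (t : nat) : seq bool :=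
  nseq 6 false ++ flatten (map block (iota 10 t)) ++ [:: true; false].
Definition witness_head : seq bool := X0 ++ X0 ++ Y0 ++ Y0.
Definition witness (t : nat) : seq bool :=
  witness_head ++ witness_tail t ++ witness_tail t.
Definition witness_gaps (t : nat) : seq nat :=
  [:: 4; 9; 5; 6] ++ iota 10 t ++ 7 :: iota 10 t.

Lemma witness_blocks t :
  witness t = flatten (map block (witness_gaps t)) ++ true :: [:: false].
Proof.
rewrite /witness /witness_head /witness_gaps /witness_tail map_cat flatten_cat /= map_cat.
by rewrite flatten_cat /= -!catA.
Qed.

Lemma size_witness_tail t : size (witness_tail t) = sumn (map S (iota 10 t)) + 8.
Proof. by rewrite /witness_tail !size_cat size_blocks size_nseq /=; lia. Qed.

Lemma count_true_witness_tail t : count_mem true (witness_tail t) = t.+1.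
Proof.
by rewrite /witness_tail !count_cat count_true_nseq_false count_true_blocks size_iota /= addn1.
Qed.

Lemma witness_run_repeat t p p' g :
  occurs_at (witness t) p (run g) -> occurs_at (witness t) p' (run g) -> p < p' ->
  p' = p + size (witness_tail t) /\ 28 <= p.
Proof.
have at_boundary q : occurs_at (witness t) q (run g) ->
    exists k, [/\ k < size (witness_gaps t), nth 0 (witness_gaps t) k = g
                & q = block_offset (witness_gaps t) k].
  case=> [L [R [<- E]]]; rewrite witness_blocks in E.
  exact: run_in_blocks E.
move=> /at_boundary [k [_ Ek ->]] /at_boundary [k' [lt_k' Ek' ->]] lt_off.
have lt_kk' : k < k'.
  by rewrite ltnNge; apply: contraL lt_off => /(block_offset_mono (witness_gaps t)); rewrite -leqNgt.
have uG : uniq ([:: 4; 9; 5; 6] ++ 7 :: iota 10 t).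
  rewrite cat_uniq /= iota_uniq mem_iota /= andbT.
  by apply/hasPn => y; rewrite mem_iota !inE; lia.
have lt_kk'_size : k < k' < size (witness_gaps t) by rewrite lt_kk' lt_k'.
have [i lt_it [-> ->]] := equal_gaps uG lt_kk'_size (etrans Ek (esym Ek')).
set P := [:: 4; 9; 5; 6]; set Z := iota 10 t.
have tiS : take i (Z ++ 7 :: Z) = take i Z by rewrite take_cat lt_it.
have o1 : block_offset (witness_gaps t) (size P + i) = 28 + block_offset Z i.
  by rewrite block_offset_cat /block_offset tiS.
have o2 : block_offset (witness_gaps t) (size P + size Z + 1 + i) =
          28 + sumn (map S Z) + 8 + block_offset Z i.
  rewrite -!addnA block_offset_cat block_offset_cat add1n /block_offset /=.
  by rewrite !addnA.
by rewrite o1 o2 size_witness_tail -/Z; lia.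
Qed.

Lemma size_witness t : size (witness t) = 22 + (size (witness_tail t)).*2.
Proof. by rewrite /witness (size_cat witness_head) (size_cat (witness_tail t)) addnn. Qed.

Lemma count_true_witness t : count_mem true (witness t) = 4 + (t.+1).*2.
Proof.
rewrite /witness (count_cat _ witness_head) (count_cat _ (witness_tail t)).
by rewrite count_true_witness_tail addnn.
Qed.

Lemma size_witness_tail_ge t : 2 <= t -> 31 <= size (witness_tail t).
Proof.
by case: t => [|[|t]] // _; rewrite size_witness_tail /= !addSn addnS; lia.
Qed.

Lemma witness_square_factor t L Q R : witness t = L ++ Q ++ Q ++ R ->
  2 <= count_mem true Q -> size Q = size (witness_tail t).
Proof.
move=> E /run_of_two_trues [q1 [g [q2 EQ]]].
have o1 : occurs_at (witness t) (size L + size q1) (run g).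
  by rewrite E; apply: (occurs_at_factor _ EQ); apply: occurs_at_cat.
have o2 : occurs_at (witness t) (size L + size q1 + size Q) (run g).
  move: o1; rewrite E => o1; apply: occurs_at_square_shift o1 _ _; first exact: leq_addr.
  by rewrite EQ !size_cat /run /= size_cat size_nseq /=; lia.
have lt_o : size L + size q1 < size L + size q1 + size Q.
  by rewrite EQ !size_cat /run /=; lia.
by have [shift_eq _] := witness_run_repeat o1 o2 lt_o; lia.
Qed.

Lemma witness_tail_unrepeated t o1 o2 (F : seq bool) : 2 <= count_mem true F ->
  occurs_at (witness_tail t) o1 F -> occurs_at (witness_tail t) o2 F -> o1 < o2 -> False.
Proof.
move=> /run_of_two_trues [f1 [g [f2 EF]]] occ1 occ2 lt_o.
have lift o : occurs_at (witness_tail t) o F ->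
    occurs_at (witness t) (size witness_head + o + size f1) (run g).
  case=> [L [R [<- E]]]; apply: (occurs_at_factor (Q := F) _ EF).
  by rewrite /witness {1}E -size_cat; exists (witness_head ++ L), (R ++ witness_tail t); rewrite -!catA.
have lt_lifted : size witness_head + o1 + size f1 < size witness_head + o2 + size f1.
  by rewrite ltn_add2r ltn_add2l.
have [E _] := witness_run_repeat (lift _ occ1) (lift _ occ2) lt_lifted.
case: occ2 => [L [R [EL Ew]]]; move: E; rewrite Ew !size_cat EF /run /= !size_cat /=; lia.
Qed.

(* In a decomposition [X X Y Y Z Z] of the witness, neither [X] nor [Y] carries
   two [true]s: a square [X X] or [Y Y] with a run would repeat the run [1 0^4 1]
   at position 0 or [1 0^6 1] at position 21, both before position 28. *)
Lemma witness_square_light t X Y Z : 2 <= t ->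
  X ++ X ++ Y ++ Y ++ Z ++ Z = witness t ->
  count_mem true X <= 1 /\ count_mem true Y <= 1.
Proof.
move=> le2t E.
have long_tail := size_witness_tail_ge le2t.
have sizes : size X + size Y + size Z = 11 + size (witness_tail t).
  by have := size_witness t; rewrite -E !size_cat; lia.
have run4 : occurs_at (witness t) 0 (run 4) by exists [::], (drop 6 (witness t)).
have run6 : occurs_at (witness t) 21 (run 6).
  move: le2t; clear; case: t => [|t] // _.
  by exists (take 21 (witness t.+1)), (drop 29 (witness t.+1)).
split; rewrite leqNgt; apply/negP => two.
  have EX : witness t = [::] ++ X ++ X ++ (Y ++ Y ++ Z ++ Z) by rewrite -E.
  have SX := witness_square_factor EX two.
  have shifted : occurs_at (witness t) (0 + size X) (run 4).
    by rewrite EX; apply: occurs_at_square_shift; rewrite -?EX //= SX; lia.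
  have lt_pos : 0 < 0 + size X by lia.
  by have [_] := witness_run_repeat run4 shifted lt_pos.
have EY : witness t = (X ++ X) ++ Y ++ Y ++ (Z ++ Z) by rewrite -E -!catA.
have SY := witness_square_factor EY two.
have [short|long] := leqP (size X) 10.
  have shifted : occurs_at (witness t) (21 + size Y) (run 6).
    by rewrite EY; apply: occurs_at_square_shift; rewrite -?EY // size_cat /=; lia.
  have lt_pos : 21 < 21 + size Y by lia.
  by have [_] := witness_run_repeat run6 shifted lt_pos.
(* Otherwise [size X = 11], but the letters at positions 0 and 11 differ. *)
have SX : size X = 11 by lia.
have := congr1 (nth false ^~ 0) E; have := congr1 (nth false ^~ 11) E.
by rewrite !nth_cat SX subnn /= => ->.
Qed.

Lemma witness_square_split t X Y Z : 2 <= t ->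
  X ++ X ++ Y ++ Y ++ Z ++ Z = witness t ->
  count_mem true X + count_mem true Y = 2 /\ Z = witness_tail t.
Proof.
move=> le2t E; have [cX cY] := witness_square_light le2t E.
have cZ : 2 <= count_mem true Z.
  by have := count_true_witness t; rewrite -E !count_cat; lia.
have EZ : witness t = (X ++ X ++ Y ++ Y) ++ Z ++ Z ++ [::] by rewrite cats0 -E -!catA.
have SZ := witness_square_factor EZ cZ.
have /eqP : witness_head ++ (witness_tail t ++ witness_tail t) = (X ++ X ++ Y ++ Y) ++ (Z ++ Z).
  by change (witness t = (X ++ X ++ Y ++ Y) ++ (Z ++ Z)); rewrite -E -!catA.
rewrite eqseq_cat; last first.
  have sizes : size X + size Y + size Z = 11 + size (witness_tail t).
    by have := size_witness t; rewrite -E !size_cat; lia.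
  have size_XY : size (X ++ X ++ Y ++ Y) = 22 by rewrite !size_cat; lia.
  exact: esym size_XY.
case/andP => /eqP Ehead; rewrite eqseq_cat ?SZ // => /andP [/eqP <- _].
by split => //; move: (congr1 (count_mem true) Ehead); rewrite !count_cat /=; lia.
Qed.

Definition subst_vars (s : nat -> seq bool) (L : seq nat) : seq bool := flatten (map s L).

Definition sq_pattern (A B C : seq nat) : pattern := map inl (A ++ A ++ B ++ B ++ C ++ C).

Definition sq_image (A B C : seq nat) (w : seq bool) : Prop :=
  exists s, w = subst_vars s A ++ subst_vars s A ++ subst_vars s B ++ subst_vars s B
                ++ subst_vars s C ++ subst_vars s C.

(* The shape of the patterns used to defeat a teaching set: every variable
   occurs at most twice in [A B C] (so at most four times in the pattern), and
   the variables of [C] occur exactly twice in [A B C]. *)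
Definition good_triple (A B C : seq nat) : Prop :=
  (forall x, count_mem x (A ++ B ++ C) <= 2) /\
  (forall x, x \in C -> count_mem x (A ++ B ++ C) = 2).

Lemma subst_vars_cat s L1 L2 : subst_vars s (L1 ++ L2) = subst_vars s L1 ++ subst_vars s L2.
Proof. by rewrite /subst_vars map_cat flatten_cat. Qed.

Lemma subst_vars_cons s x L : subst_vars s (x :: L) = s x ++ subst_vars s L.
Proof. by []. Qed.

Lemma lang_sq_pattern A B C w : lang (sq_pattern A B C) w <-> sq_image A B C w.
Proof.
have E s : subst_apply s (sq_pattern A B C) = subst_vars s (A ++ A ++ B ++ B ++ C ++ C).
  by rewrite /subst_apply /subst_vars -map_comp.
by split=> [[s ->]|[s ->]]; exists s; rewrite E !subst_vars_cat.
Qed.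

Lemma sq_image_pi A B C w : sq_image A B C w -> lang pi_sq w.
Proof.
case=> s ->; exists (fun x => nth (subst_vars s C) [:: subst_vars s A; subst_vars s B] x).
by rewrite /subst_apply /= cats0.
Qed.

Lemma sq_pattern_in_class m A B C : 4 <= m -> good_triple A B C -> A != [::] ->
  in_class m (sq_pattern A B C).
Proof.
move=> le4m [twice _] nA; split.
- by rewrite /sq_pattern; case: (A) nA.
- by rewrite /constant_free all_map; apply/allP.
- move=> x; rewrite count_map (eq_count (a2 := pred1 x)) // !count_cat.
  by have := twice x; rewrite !count_cat; lia.
Qed.

Lemma count_true_subst_vars s L :
  count_mem true (subst_vars s L) = \sum_(x <- L) count_mem true (s x).
Proof. by rewrite /subst_vars count_flatten sumnE !big_map. Qed.

Lemma good_triple_weight A B C (f : nat -> nat) : good_triple A B C ->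
  (forall x, count_mem x C = 2 -> f x <= 1) ->
  \sum_(x <- C) f x <= size C + \sum_(x <- A ++ B) f x.
Proof.
move=> [twice inC] light; rewrite (bigID (fun x => count_mem x C == 1)) /= addnC.
apply: leq_add.
  (* A variable occurring twice in [C] has weight at most one... *)
- rewrite -sum1_size big_mkcond /= !big_seq leq_sum // => x xC.
  case: eqP => //= C1; apply: light.
  have {}C1 : count_mem x C != 1 by apply/eqP.
  have := inC x xC; move: xC C1; rewrite -has_pred1 has_count !count_cat; lia.
  (* ... and one occurring once in [C] also occurs once in [A B]. *)
- apply: (@sub_le_big_seq_cond nat addn leq leqnn (fun x y => leq_addr y x)) => x.
  rewrite (_ : [seq y <- A ++ B | true] = A ++ B); last exact: filter_predT.
  have [C1|C1] := eqVneq (count_mem x C) 1; last first.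
    by rewrite (count_memPn _) // mem_filter (negbTE C1).
  have xC : x \in C by rewrite -has_pred1 has_count C1.
  apply: leq_trans (leq_count_subseq _ (filter_subseq _ C)) _.
  by have := inC x xC; rewrite !count_cat; lia.
Qed.

Lemma split_two_occurrences (T : eqType) (x : T) s : 2 <= count_mem x s ->
  exists s1 s2 s3, s = s1 ++ x :: s2 ++ x :: s3.
Proof.
elim: s => [|y s IH] //=; case: (eqVneq y x) => [->|_].
  rewrite add1n ltnS -has_count has_pred1 => /splitPr [s2 s3].
  by exists [::], s2, s3.
by rewrite add0n => /IH [s1 [s2 [s3 ->]]]; exists (y :: s1), s2, s3.
Qed.

Lemma witness_not_sq_image A B C : good_triple A B C ->
  ~ sq_image A B C (witness (size C + 2)).
Proof.
move=> good [s E]; set t := size C + 2.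
have [trues_AB EZ] := witness_square_split (leq_addl _ 2) (esym E).
have light x : count_mem x C = 2 -> count_mem true (s x) <= 1.
  move=> twiceC; rewrite leqNgt; apply/negP => heavy.
  have [C1 [C2 [C3 EC]]] : exists C1 C2 C3, C = C1 ++ x :: C2 ++ x :: C3.
    by apply: split_two_occurrences; rewrite twiceC.
  have EZ' : witness_tail t = subst_vars s C1 ++ s x ++ (subst_vars s C2 ++ s x ++ subst_vars s C3).
    by rewrite -EZ EC !(subst_vars_cat, subst_vars_cons).
  apply: (witness_tail_unrepeated (t := t) heavy (o1 := size (subst_vars s C1))
            (o2 := size (subst_vars s C1 ++ s x ++ subst_vars s C2))).
  - by rewrite EZ'; apply: occurs_at_cat.
  - rewrite EZ'; exists (subst_vars s C1 ++ s x ++ subst_vars s C2), (subst_vars s C3).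
    by rewrite -!catA.
  - by rewrite !size_cat; case: (s x) heavy => //= *; lia.
have := good_triple_weight good light.
rewrite -!count_true_subst_vars EZ count_true_witness_tail subst_vars_cat count_cat.
by rewrite trues_AB /t; lia.
Qed.

Lemma count_by_rank (T : eqType) (x0 c : T) (z : seq T) (P : pred nat) :
  count (fun j => (nth x0 z j == c) && P (count_mem c (take j z))) (iota 0 (size z)) =
  count P (iota 0 (count_mem c z)).
Proof.
elim/last_ind: z => [|z d IH] //.
rewrite size_rcons -addn1 iotaD count_cat /= -cats1 count_cat /= addn0.
rewrite nth_cat ltnn subnn /= take_cat ltnn subnn take0 cats0.
rewrite (@eq_in_count _ _ (fun j => (nth x0 z j == c) && P (count_mem c (take j z)))); last first.
  by move=> j; rewrite mem_iota add0n => /andP [_ lt_j] /=; rewrite nth_cat lt_j take_cat lt_j.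
rewrite IH; case: (d == c) => /=; last by rewrite !addn0.
by rewrite addn1 -addn1 iotaD count_cat /= addn0.
Qed.

Lemma count_half n k : count (fun r => r./2 == k) (iota 0 n) = minn 2 (n - k.*2).
Proof.
elim: n => [|n IH]; first by rewrite minn0.
by rewrite -addn1 iotaD count_cat IH /= -divn2; case: eqP => /=; lia.
Qed.

Lemma pair_count n k : (odd n && (k == n./2)) + minn 2 (n - k.*2) = (k.*2 < n) * 2.
Proof.
have := odd_double_half n; rewrite -!divn2.
by case: (odd n) => /= En; case: (k =P n %/ 2) => /= ?; lia.
Qed.

Section PiWordRepresentation.
Variables u v z : seq bool.
Hypothesis odd_in_uv : forall c : bool, odd (count_mem c z) -> c \in u ++ v.

Let uv := u ++ v.
Let N0 := size uv.
Let cz c := count_mem c z.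

(* The variables below [N0] stand for the positions of [u v]; [pair_var c k]
   stands for the [k]-th pair of occurrences of the letter [c] in [z]. *)
Definition pair_var (c : bool) (k : nat) : nat := N0 + k.*2 + c.

(* Position [j] of [u v] gets the variable [j], except the first occurrence of
   a letter of odd count in [z], which shares the variable of its unpaired last
   occurrence in [z]. *)
Definition uv_var (j : nat) : nat :=
  let c := nth false uv j in
  if odd (cz c) && (j == index c uv) then pair_var c (cz c)./2 else j.

Definition rep_A : seq nat := map uv_var (iota 0 (size u)).
Definition rep_B : seq nat := map uv_var (iota (size u) (size v)).
Definition rep_C : seq nat :=
  [seq pair_var (nth false z j) (count_mem (nth false z j) (take j z))./2 | j <- iota 0 (size z)].
Definition rep_subst (x : nat) : seq bool :=
  if x < N0 then [:: nth false uv x] else [:: odd (x - N0)].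

Lemma pair_var_ge c k : N0 <= pair_var c k.
Proof. by rewrite /pair_var -addnA leq_addr. Qed.

Lemma pair_var_inj c k d l : (pair_var c k == pair_var d l) = (c == d) && (k == l).
Proof.
apply/eqP/andP => [E|[/eqP -> /eqP ->]] //.
have Ec : c = d.
  move: (congr1 odd E); rewrite /pair_var !oddD !odd_double.
  by case: c d {E} => [] []; case: (odd N0).
by subst d; split => //; apply/eqP; move: E; rewrite /pair_var; case: c => /=; lia.
Qed.

Lemma rep_subst_pair_var c k : rep_subst (pair_var c k) = [:: c].
Proof.
rewrite /rep_subst ltnNge pair_var_ge /= /pair_var -addnA addKn.
by rewrite oddD odd_double /=; case: c.
Qed.

Lemma rep_subst_uv_var j : j < N0 -> rep_subst (uv_var j) = [:: nth false uv j].
Proof.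
move=> lt_j; rewrite /uv_var; case: ifP => _; first exact: rep_subst_pair_var.
by rewrite /rep_subst lt_j.
Qed.

Lemma subst_uv_vars i n : i + n <= N0 ->
  subst_vars rep_subst (map uv_var (iota i n)) = take n (drop i uv).
Proof.
move=> le_iN; rewrite /subst_vars -map_comp -(map_nth_iota false); last by rewrite /N0 in le_iN; lia.
rewrite -[in RHS]flatten_map1; congr flatten; apply/eq_in_map => j.
by rewrite mem_iota => /andP [_ lt_j] /=; rewrite rep_subst_uv_var //; lia.
Qed.

Lemma subst_rep_A : subst_vars rep_subst rep_A = u.
Proof. by rewrite subst_uv_vars /uv ?drop0 ?take_size_cat // /N0 size_cat leq_addr. Qed.

Lemma subst_rep_B : subst_vars rep_subst rep_B = v.
Proof. by rewrite subst_uv_vars /uv ?drop_size_cat ?take_size // /N0 size_cat. Qed.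

Lemma subst_rep_C : subst_vars rep_subst rep_C = z.
Proof.
rewrite /subst_vars /rep_C -map_comp -[RHS]take_size -(map_nth_iota0 false) // -[in RHS]flatten_map1.
by congr flatten; apply: eq_map => j /=; rewrite rep_subst_pair_var.
Qed.

Lemma rep_sq_image : sq_image rep_A rep_B rep_C (u ++ u ++ v ++ v ++ z ++ z).
Proof. by exists rep_subst; rewrite subst_rep_A subst_rep_B subst_rep_C. Qed.

Lemma uniq_uv_vars : uniq (map uv_var (iota 0 N0)).
Proof.
rewrite map_inj_in_uniq ?iota_uniq // => j j'; rewrite !mem_iota !add0n.
move=> /andP [_ lt_j] /andP [_ lt_j']; rewrite /uv_var.
case: ifP => [/andP [_ /eqP Ej]|_]; case: ifP => [/andP [_ /eqP Ej']|_].
- by move/eqP; rewrite pair_var_inj => /andP [/eqP Ec _]; rewrite Ej Ej' Ec.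
- by move=> E; move: (pair_var_ge (nth false uv j) (cz (nth false uv j))./2); lia.
- by move=> E; move: (pair_var_ge (nth false uv j') (cz (nth false uv j'))./2); lia.
- done.
Qed.

Lemma mem_uv_vars c k :
  (pair_var c k \in map uv_var (iota 0 N0)) = odd (cz c) && (k == (cz c)./2).
Proof.
apply/mapP/andP => [[j] | [odd_c /eqP ->]].
  rewrite mem_iota add0n /uv_var => /andP [_ lt_j]; case: ifP => [/andP [odd_c _]|_].
    by move/eqP; rewrite pair_var_inj => /andP [/eqP -> /eqP ->].
  by move=> E; move: (pair_var_ge c k); lia.
have uv_c : c \in uv := odd_in_uv odd_c.
exists (index c uv); first by rewrite mem_iota add0n index_mem.
by rewrite /uv_var nth_index // odd_c eqxx.
Qed.

Lemma count_rep_C c k : count_mem (pair_var c k) rep_C = minn 2 (cz c - k.*2).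
Proof.
rewrite /rep_C count_map -count_half -(count_by_rank false).
apply: eq_in_count => j _ /=; rewrite pair_var_inj.
by case: (nth false z j =P c) => [->|].
Qed.

Lemma count_rep_C_small x : x < N0 -> count_mem x rep_C = 0.
Proof.
move=> lt_x; apply/count_memPn/mapP => [[j _ E]].
by move: (pair_var_ge (nth false z j) (count_mem (nth false z j) (take j z))./2); lia.
Qed.

(* Each variable occurs twice in all if it occurs in [rep_C], at most once
   otherwise. *)
Lemma rep_good : good_triple rep_A rep_B rep_C.
Proof.
have E x : count_mem x (rep_A ++ rep_B ++ rep_C) =
    (x \in map uv_var (iota 0 N0)) + count_mem x rep_C.
  rewrite catA count_cat /rep_A /rep_B -map_cat -iotaD /N0 size_cat.
  by rewrite count_uniq_mem // -size_cat uniq_uv_vars.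
have pair x : N0 <= x -> x = pair_var (odd (x - N0)) (x - N0)./2.
  by move=> le_x; rewrite /pair_var -addnA (addnC _.*2) odd_double_half subnKC.
split => [x|_ /mapP [j jz ->]].
  have [lt_x|le_x] := ltnP x N0; first by rewrite E count_rep_C_small // addn0; case: (_ \in _).
  by rewrite (pair _ le_x) E mem_uv_vars count_rep_C pair_count; case: ltnP.
rewrite E mem_uv_vars count_rep_C pair_count.
set c := nth false z j; set k := (count_mem c (take j z))./2.
suff : 0 < minn 2 (cz c - k.*2) by case: ltnP => //; lia.
by rewrite -count_rep_C -has_count has_pred1; apply/mapP; exists j.
Qed.

End PiWordRepresentation.

(* If some letter
   [c] occurs an odd number of times in [z] but not in [u v], then [u u v v]
   is a square of [~~ c]s and [w = n n z z] is handled with an empty [C]. *)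
Lemma pi_word_good_image w : lang pi_sq w ->
  exists A B C, good_triple A B C /\ sq_image A B C w.
Proof.
case=> s ->; set u := s 0; set v := s 1; set z := s 2.
rewrite (_ : subst_apply s pi_sq = u ++ u ++ v ++ v ++ z ++ z); last by rewrite /subst_apply /= cats0.
have [/forallP odd_in_uv|] := boolP [forall c : bool, odd (count_mem c z) ==> (c \in u ++ v)].
  exists (rep_A u v z), (rep_B u v z), (rep_C u v z); split.
  - by apply: rep_good => c; apply/implyP.
  - exact: rep_sq_image.
rewrite negb_forall => /existsP [c]; rewrite negb_imply => /andP [_ c_notin].
set n := nseq (size u + size v) (~~ c).
have /all_pred1P Euv : all (pred1 (~~ c)) (u ++ u ++ v ++ v).
  apply/allP => d d_in; apply/eqP; apply: contraNeq c_notin => ne.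
  rewrite (_ : c = d); last by case: c d ne {d_in n} => [] [].
  by move: d_in; rewrite !mem_cat => /orP [|/orP [|/orP []]] ->; rewrite ?orbT.
have Ew : u ++ u ++ v ++ v ++ z ++ z = n ++ n ++ z ++ z ++ [::] ++ [::].
  rewrite !cats0 [RHS]catA (_ : n ++ n = u ++ u ++ v ++ v) -?catA //.
  by rewrite Euv /n -nseqD !size_cat addnACA !addnA.
exists (rep_A n z [::]), (rep_B n z [::]), (rep_C n z [::]); split.
- exact: rep_good.
- by rewrite Ew; apply: rep_sq_image.
Qed.

(* Disjoint union of square patterns: [A2 B2 C2] is shifted by [N] above the
   variables of [A1 B1 C1]; erasing either component recovers the images of
   the other, since the patterns are erasing. *)
Definition shift_vars (N : nat) (L : seq nat) : seq nat := map (addn N) L.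

Lemma count_shift_vars N x L :
  count_mem x (shift_vars N L) = if N <= x then count_mem (x - N) L else 0.
Proof.
rewrite /shift_vars; case: leqP => le_Nx.
- by rewrite count_map; apply: eq_count => y /=; apply/eqP/eqP; lia.
- by apply/count_memPn/mapP => [[y _ E]]; lia.
Qed.

Lemma subst_vars_eq_in s s' L : {in L, s =1 s'} -> subst_vars s L = subst_vars s' L.
Proof. by move=> eq_s; rewrite /subst_vars; congr flatten; apply/eq_in_map. Qed.

Section Union.
Variables (N : nat) (A1 B1 C1 A2 B2 C2 : seq nat).
Hypothesis below_N : forall x, x \in A1 ++ B1 ++ C1 -> x < N.

Let A := A1 ++ shift_vars N A2.
Let B := B1 ++ shift_vars N B2.
Let C := C1 ++ shift_vars N C2.

Lemma count_union x : count_mem x (A ++ B ++ C) =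
  count_mem x (A1 ++ B1 ++ C1) + (if N <= x then count_mem (x - N) (A2 ++ B2 ++ C2) else 0).
Proof. by rewrite /A /B /C !count_cat !count_shift_vars; case: leqP => _; lia. Qed.

Lemma count_low_zero x : N <= x -> count_mem x (A1 ++ B1 ++ C1) = 0.
Proof. by move=> le_Nx; apply/count_memPn/negP => /below_N; lia. Qed.

Lemma good_triple_union : good_triple A1 B1 C1 -> good_triple A2 B2 C2 -> good_triple A B C.
Proof.
move=> [twice1 inC1] [twice2 inC2]; split=> x; rewrite count_union.
  case: (leqP N x) => [le_Nx|_]; last by rewrite addn0 twice1.
  by rewrite count_low_zero ?twice2.
rewrite mem_cat => /orP [xC1|/mapP [y yC2 ->]].
  have /below_N lt_xN : x \in A1 ++ B1 ++ C1 by rewrite !mem_cat xC1 !orbT.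
  by rewrite leqNgt lt_xN addn0 inC1.
by rewrite leq_addr count_low_zero ?leq_addr // addKn inC2.
Qed.

Lemma sq_image_union_l w : sq_image A1 B1 C1 w -> sq_image A B C w.
Proof.
case=> s ->; exists (fun x => if x < N then s x else [::]).
have low L : {subset L <= A1 ++ B1 ++ C1} ->
    subst_vars (fun x => if x < N then s x else [::]) L = subst_vars s L.
  by move=> sub_L; apply: subst_vars_eq_in => x /sub_L /below_N ->.
have high L : subst_vars (fun x => if x < N then s x else [::]) (shift_vars N L) = [::].
  by rewrite /subst_vars /shift_vars -map_comp; elim: L => //= x L ->; rewrite ltnNge leq_addr.
by rewrite /A /B /C !subst_vars_cat !high !cats0 !low // => x x_in; rewrite !mem_cat x_in ?orbT.
Qed.

Lemma sq_image_union_r w : sq_image A2 B2 C2 w -> sq_image A B C w.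
Proof.
case=> s ->; exists (fun x => if x < N then [::] else s (x - N)).
have low L : {subset L <= A1 ++ B1 ++ C1} ->
    subst_vars (fun x => if x < N then [::] else s (x - N)) L = [::].
  move=> sub_L; rewrite (subst_vars_eq_in (s' := fun=> [::])) => [|x /sub_L /below_N ->] //.
  by rewrite /subst_vars; elim: L {sub_L} => //= x L ->.
have high L : subst_vars (fun x => if x < N then [::] else s (x - N)) (shift_vars N L) = subst_vars s L.
  by rewrite /subst_vars /shift_vars -map_comp; congr flatten; apply: eq_map => x /=; rewrite ltnNge leq_addr addKn.
by rewrite /A /B /C !subst_vars_cat !high !low // => x x_in; rewrite !mem_cat x_in ?orbT.
Qed.

End Union.

Definition var_bound (L : seq nat) : nat := \max_(x <- L) x.+1.

Lemma var_bound_gt x L : x \in L -> x < var_bound L.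
Proof. by move=> xL; apply: (leq_bigmax_seq (F := succn) x xL). Qed.

Lemma good_triple_for_words (P : seq (seq bool)) : (forall w, w \in P -> lang pi_sq w) ->
  exists A B C, [/\ good_triple A B C, A != [::] & forall w, w \in P -> sq_image A B C w].
Proof.
elim: P => [|w P IH] P_pi.
  exists [:: 0], [::], [::]; split => //; split=> // x.
  by rewrite /= addn0; case: (_ == _).
have [A1 [B1 [C1 [good1 nA1 images1]]]] : exists A B C,
    [/\ good_triple A B C, A != [::] & forall w, w \in P -> sq_image A B C w].
  by apply: IH => w' w'P; apply: P_pi; rewrite inE w'P orbT.
have [A2 [B2 [C2 [good2 image2]]]] := pi_word_good_image (P_pi w (mem_head w P)).
have below x : x \in A1 ++ B1 ++ C1 -> x < var_bound (A1 ++ B1 ++ C1).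
  exact: var_bound_gt.
exists (A1 ++ shift_vars (var_bound (A1 ++ B1 ++ C1)) A2).
exists (B1 ++ shift_vars (var_bound (A1 ++ B1 ++ C1)) B2).
exists (C1 ++ shift_vars (var_bound (A1 ++ B1 ++ C1)) C2); split.
- exact: good_triple_union.
- by case: (A1) nA1.
- move=> w'; rewrite inE => /orP [/eqP ->|w'P]; first exact: sq_image_union_r.
  exact/sq_image_union_l/images1.
Qed.

Lemma witness_in_pi t : lang pi_sq (witness t).
Proof.
by exists (fun x => nth (witness_tail t) [:: X0; Y0] x); rewrite /subst_apply /= cats0.
Qed.

Theorem mainTheorem18 (m : nat) (hm : 4 <= m) : TD_infinite m pi_sq.
Proof.
move=> [T [cons_T teach]].
set P := [seq e.1 | e <- T & e.2].
have P_pi w : w \in P -> lang pi_sq w.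
  by case/mapP => e; rewrite mem_filter => /andP [pos eT] ->; apply/(cons_T e eT).
have [A [B [C [good nA images]]]] := good_triple_for_words P_pi.
have tau_class := sq_pattern_in_class hm good nA.
have tau_cons : consistent (sq_pattern A B C) T.
  move=> e eT; split => [/lang_sq_pattern /sq_image_pi /(cons_T e eT) //|pos].
  by apply/lang_sq_pattern/images/mapP; exists e; rewrite ?mem_filter ?pos.
apply: (witness_not_sq_image good); apply/lang_sq_pattern.
exact/(teach _ tau_class tau_cons)/witness_in_pi.
Qed.
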